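(* $U(1,\infty)=\{2314,\,3124,\,3142\}$, and for every integer $t\ge 2$, $$U(1,t)=\{2314,\,3124,\,3142,\,(t+1)\,t\,(t-1)\cdots 2\,1\,(t+2)\},$$ where the last permutation has length $t+2$ and lists $t+1,t,\dots,1$ in decreasing order followed by $t+2$.
   Context: Forkstack sorting with capacities $s,t\in\{1,2,3,\dots\}\cup\{\infty\}$: a permutation $\pi=\pi_1\cdots\pi_n$ of $\{1,\dots,n\}$ is placed on an input stack with $\pi_1$ on top; a working stack and an output stack are initially empty. A move either (i) removes the top $k$ elements of the input stack ($1\le k\le s$) and places them as a block, relative order unchanged, on top of the working stack, or (ii) removes the top $l$ elements of the working stack ($1\le l\le t$) and places them as a block, relative order unchanged, on top of the output stack. $\pi$ is sortable if some sequence of moves ends with input and working stacks empty and the output stack reading $1,2,\dots,n$ from top to bottom. $\mathcal F(s,t)$ is the set of sortable permutations. A permutation $\sigma$ is involved in $\pi$ if some subsequence of $\pi$ of length $|\sigma|$ has entries in the same relative order as $\sigma$. $U(s,t)$ is the set of involvement-minimal permutations not in $\mathcal F(s,t)$. Permutations are written in one-line notation. *)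

From mathcomp Require Import all_boot.
Set Implicit Arguments. Unset Strict Implicit. Unset Printing Implicit Defensive.

Inductive cap := Fin of nat | Inf.

Definition cap_ok (c : cap) : bool :=
  match c with Fin n => 0 < n | Inf => true end.

Definition allowed (c : cap) (k : nat) : bool :=
  (0 < k) && match c with Fin n => k <= n | Inf => true end.

Definition is_perm (p : seq nat) : bool := perm_eq p (iota 1 (size p)).

(* States: (input, working, output); the head of each list is the top. *)
Definition state := (seq nat * seq nat * seq nat)%type.

Inductive move (s t : cap) : state -> state -> Prop :=
| move_in (i w o : seq nat) (k : nat) :
    allowed s k -> k <= size i ->
    move s t (i, w, o) (drop k i, take k i ++ w, o)
| move_out (i w o : seq nat) (l : nat) :
    allowed t l -> l <= size w ->
    move s t (i, w, o) (i, drop l w, take l w ++ o).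

Inductive reach (s t : cap) : state -> state -> Prop :=
| reach_refl x : reach s t x x
| reach_step x y z : move s t x y -> reach s t y z -> reach s t x z.

Definition sortable (s t : cap) (p : seq nat) : Prop :=
  reach s t (p, [::], [::]) ([::], [::], iota 1 (size p)).

Definition involved (sigma p : seq nat) : Prop :=
  exists q : seq nat, [/\ subseq q p, size q = size sigma &
    forall i j, i < size sigma -> j < size sigma ->
      (nth 0 q i < nth 0 q j) = (nth 0 sigma i < nth 0 sigma j)].

Definition inU (s t : cap) (p : seq nat) : Prop :=
  [/\ is_perm p, ~ sortable s t p &
      forall sigma, is_perm sigma -> involved sigma p -> sigma <> p ->
        sortable s t sigma].

From mathcomp Require Import all_boot zify.
From Stdlib Require Import Classical.
Set Implicit Arguments. Unset Strict Implicit. Unset Printing Implicit Defensive.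

(* Sufficiency is a greedy algorithm: when the largest value not yet output is
   on the working stack, move out the top run of the working stack, otherwise
   push the next input value.  Avoiding 2314, 3124 and 3142 keeps the working
   stack a pile of runs of consecutive values, each above everything beneath
   it, and avoiding (t+1) t ... 1 (t+2) keeps every run at most t long, so each
   of these output moves is legal.  Conversely the listed permutations are not
   sortable (the three of length 4 by exhaustive search) and none contains
   another, so they are exactly the minimal unsortable permutations. *)

Lemma involved_size (s p : seq nat) : involved s p -> size s <= size p.
Proof. by case=> q [/size_subseq + <- _]. Qed.

Lemma involved_subseq (s p p' : seq nat) : subseq p' p -> involved s p' -> involved s p.
Proof. by move=> sub_p' [q [sub_q Hsz Hiso]]; exists q; split=> //; apply: subseq_trans sub_p'. Qed.

Lemma involved_trans (a b p : seq nat) : uniq b -> involved a b -> involved b p -> involved a p.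
Proof.
move=> Ub [r [sub_r Hra iso_ar]] [q [sub_q Hqb iso_bq]].
pose f x := nth 0 q (index x b).
have map_f : map f b = q.
  apply: (eq_from_nth (x0 := 0)) => [|i]; rewrite size_map // => Hi.
  by rewrite (nth_map 0) // /f index_uniq.
exists (map f r); split; first by apply: subseq_trans sub_q; rewrite -map_f map_subseq.
  by rewrite size_map.
move=> i j Hi Hj; rewrite -Hra in Hi Hj.
have r_b k : k < size r -> nth 0 r k \in b by move=> Hk; apply: (mem_subseq sub_r); apply: mem_nth.
by rewrite !(nth_map 0) // /f iso_bq ?index_mem ?r_b // !nth_index ?r_b // iso_ar -?Hra.
Qed.

Lemma count_lt_iota x n : 0 < x <= n -> count (fun y => y < x) (iota 1 n) = x.-1.
Proof.
move=> Hx; have /subnKC <- : x.-1 <= n by lia.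
rewrite iotaD count_cat.
rewrite (@eq_in_count _ _ predT) => [|y]; last by rewrite mem_iota inE => ?; lia.
rewrite (@eq_in_count _ (fun y => y < x) pred0) => [|y].
  by rewrite count_predT count_pred0 size_iota addn0.
by rewrite mem_iota => ?; apply/negbTE; lia.
Qed.

Lemma is_perm_uniq (s : seq nat) : is_perm s -> uniq s.
Proof. by move=> Ps; rewrite (perm_uniq Ps) iota_uniq. Qed.

Lemma perm_mem_range (s : seq nat) (x : nat) : is_perm s -> x \in s -> 0 < x <= size s.
Proof. by move=> Ps; rewrite (perm_mem Ps) mem_iota add1n ltnS. Qed.

(* In a permutation of [1..n] the value at position i is one more than the
   number of smaller values, so relative order determines the values. *)
Lemma perm_rank (s : seq nat) i : is_perm s -> i < size s ->
  count (fun j => nth 0 s j < nth 0 s i) (iota 0 (size s)) = (nth 0 s i).-1.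
Proof.
move=> Ps Hi.
rewrite -[count _ _](count_map (nth 0 s) (fun y => y < nth 0 s i)) -/(mkseq _ _) mkseq_nth.
by rewrite (permP Ps) count_lt_iota // (perm_mem_range Ps) ?mem_nth.
Qed.

Lemma involved_eq (s p : seq nat) :
  is_perm s -> is_perm p -> involved s p -> size s = size p -> s = p.
Proof.
move=> Ps Pp [q [sub_q Hqs iso]] Hsz.
have {sub_q}Eq : q = p by apply/eqP; rewrite -(size_subseq_leqif sub_q).2 Hqs Hsz.
subst q; apply: (eq_from_nth (x0 := 0)) => // i Hi.
have Hi' : i < size p by rewrite -Hsz.
have := perm_rank Pp Hi'; rewrite -Hsz (eq_in_count (a2 := fun j => nth 0 s j < nth 0 s i)).
  have /andP[s_pos _] := perm_mem_range Ps (mem_nth 0 Hi).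
  have /andP[p_pos _] := perm_mem_range Pp (mem_nth 0 Hi').
  by rewrite perm_rank // => E; rewrite -(prednK s_pos) E prednK.
by move=> j; rewrite mem_iota => Hj; apply: iso.
Qed.

Lemma involved_lt (s p : seq nat) :
  is_perm s -> is_perm p -> involved s p -> s <> p -> size s < size p.
Proof.
move=> Ps Pp Hsp Hne; rewrite ltn_neqAle involved_size // andbT.
by apply: contra_notN Hne => /eqP; apply: involved_eq.
Qed.

Definition decr_then_max (t : nat) : seq nat := rcons (rev (iota 1 t.+1)) t.+2.

Definition basis (c : cap) : seq (seq nat) :=
  [:: [:: 2; 3; 1; 4]; [:: 3; 1; 2; 4]; [:: 3; 1; 4; 2]] ++
  if c is Fin t then [:: decr_then_max t] else [::].

Definition avoids (c : cap) (p : seq nat) : Prop :=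
  forall r, r \in basis c -> ~ involved r p.

Lemma avoids_subseq c (p p' : seq nat) : subseq p' p -> avoids c p -> avoids c p'.
Proof. by move=> sub_p' Ap r Hr /(involved_subseq sub_p'); apply: Ap. Qed.

Lemma involved4 (s : seq nat) x1 x2 x3 x4 p : size s = 4 -> subseq [:: x1; x2; x3; x4] p ->
  (forall i j, i < 4 -> j < 4 ->
    (nth 0 [:: x1; x2; x3; x4] i < nth 0 [:: x1; x2; x3; x4] j) = (nth 0 s i < nth 0 s j)) ->
  involved s p.
Proof. by move=> Hs sub_x iso; exists [:: x1; x2; x3; x4]; rewrite Hs. Qed.

Local Ltac order_iso4 :=
  move=> [|[|[|[|i]]]] [|[|[|[|j]]]] //= _ _; lia.

Lemma involved_2314 x1 x2 x3 x4 p : x3 < x1 < x2 -> x2 < x4 ->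
  subseq [:: x1; x2; x3; x4] p -> involved [:: 2; 3; 1; 4] p.
Proof. by move=> /andP[h1 h2] h3 /involved4; apply=> //; order_iso4. Qed.

Lemma involved_3124 x1 x2 x3 x4 p : x2 < x3 < x1 -> x1 < x4 ->
  subseq [:: x1; x2; x3; x4] p -> involved [:: 3; 1; 2; 4] p.
Proof. by move=> /andP[h1 h2] h3 /involved4; apply=> //; order_iso4. Qed.

Lemma involved_3142 x1 x2 x3 x4 p : x2 < x4 < x1 -> x1 < x3 ->
  subseq [:: x1; x2; x3; x4] p -> involved [:: 3; 1; 4; 2] p.
Proof. by move=> /andP[h1 h2] h3 /involved4; apply=> //; order_iso4. Qed.

Lemma nth_rcons_rev_iota a t M i : i <= t.+1 ->
  nth 0 (rcons (rev (iota a t.+1)) M) i = if i <= t then a + (t - i) else M.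
Proof.
move=> Hi; rewrite nth_rcons size_rev size_iota ltnS.
case: leqP => [Hit|Hti]; first by rewrite nth_rev ?size_iota ?nth_iota //; lia.
have -> : i = t.+1 by lia.
by rewrite eqxx.
Qed.

Lemma involved_decr_then_max t a M p : a + t < M ->
  subseq (rcons (rev (iota a t.+1)) M) p -> involved (decr_then_max t) p.
Proof.
move=> HM sub_p; exists (rcons (rev (iota a t.+1)) M); split => //.
  by rewrite !size_rcons !size_rev !size_iota.
rewrite size_rcons size_rev size_iota => i j Hi Hj.
by rewrite !nth_rcons_rev_iota //; case: (leqP i t); case: (leqP j t); lia.
Qed.

Lemma decr_then_max_perm t : is_perm (decr_then_max t).
Proof.
rewrite /is_perm /decr_then_max size_rcons size_rev size_iota.
have -> : iota 1 t.+2 = iota 1 t.+1 ++ [:: t.+2] by rewrite -[X in iota 1 X]addn1 iotaD add1n.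
by rewrite -cats1 perm_cat2r perm_rev.
Qed.

Lemma decr_then_max_size t : size (decr_then_max t) = t.+2.
Proof. by rewrite size_rcons size_rev size_iota. Qed.

Lemma subseq_rcons2 (T : eqType) (s u : seq T) x y :
  subseq (rcons s x) (rcons u y) -> subseq s u.
Proof.
rewrite -subseq_rev !rev_rcons /=; case: eqP => _; first by rewrite subseq_rev.
by move/(subseq_trans (subseq_cons _ x)); rewrite subseq_rev.
Qed.

Lemma subseq_decr_then_max t q0 q1 q2 q3 :
  subseq [:: q0; q1; q2; q3] (decr_then_max t) -> q1 < q0 /\ q2 < q1.
Proof.
rewrite -[[:: q0; q1; q2; q3]]/(rcons [:: q0; q1; q2] q3) => /subseq_rcons2/subseq_sorted.
have gt_trans : transitive (fun x y => y < x) by move=> x y z h1 h2; apply: ltn_trans h2 h1.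
by move=> /(_ _ gt_trans); rewrite rev_sorted iota_ltn_sorted => /(_ isT)/and3P[].
Qed.

(* Any four entries of the pattern begin with a descent of length three,
   whereas each of 2314, 3124, 3142 has an ascent among its first three. *)
Lemma decr_then_max_avoids t r : r \in basis Inf -> ~ involved r (decr_then_max t).
Proof.
rewrite !inE => /or3P[]/eqP-> [q [sub_q Hsz iso]].
all: case: q sub_q Hsz iso => [|q0 [|q1 [|q2 [|q3 [|]]]]] // sub_q _ iso.
all: have [h1 h2] := subseq_decr_then_max sub_q.
- by have := iso 0 1 isT isT; rewrite /= ltnNge (ltnW h1).
- by have := iso 1 2 isT isT; rewrite /= ltnNge (ltnW h2).
- by have := iso 1 2 isT isT; rewrite /= ltnNge (ltnW h2).
Qed.

Definition sorted_state (n : nat) : state := ([::], [::], iota 1 n).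

Lemma reachE s t i w o y : reach s t (i, w, o) y ->
  [\/ y = (i, w, o),
      exists k, [/\ allowed s k, k <= size i & reach s t (drop k i, take k i ++ w, o) y] |
      exists l, [/\ allowed t l, l <= size w & reach s t (i, drop l w, take l w ++ o) y]].
Proof.
move Ex: (i, w, o) => x Hr; case: Hr Ex => [x0 <-|x0 y0 z0 Hm Hr]; first by constructor 1.
case: Hm Hr => [i' w' o' k Hk Hki|i' w' o' l Hl Hlw] Hr [-> -> ->].
- by constructor 2; exists k.
- by constructor 3; exists l.
Qed.

Lemma reach_output_suffix s t x y : reach s t x y -> suffix x.2 y.2.
Proof.
elim=> [z|x0 y0 z Hm _ IH]; first exact: suffix_refl.
apply: suffix_trans IH; case: Hm => [i w o k _ _|i w o l _ _] /=.
- exact: suffix_refl.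
- exact: suffix_suffix.
Qed.

Lemma reach_sorted_output s t i w o n : reach s t (i, w, o) (sorted_state n) ->
  forall x y, x \in o -> x <= y <= n -> y \in o.
Proof.
move=> /reach_output_suffix/suffixP[u /= Hu] x y.
have -> : o = drop (size u) (iota 1 n) by rewrite Hu drop_size_cat.
by rewrite drop_iota !mem_iota; lia.
Qed.

Lemma reach_widen_out s t x y : reach s (Fin t) x y -> reach s Inf x y.
Proof.
elim=> [z|x0 y0 z Hm _ IH]; first exact: reach_refl.
apply: reach_step IH; case: Hm => [i w o k Hk Hki|i w o l /andP[Hl _] Hlw].
- exact: move_in.
- by apply: move_out => //; rewrite /allowed Hl.
Qed.

Lemma allowed_Fin1 k : allowed (Fin 1) k -> k = 1.
Proof. by case/andP; case: k => [|[]]. Qed.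

(* With input capacity 1 the values [t+1, ..., 1] of [decr_then_max t] reach the
   working stack one at a time, so nothing can be output before [t+2] has been
   pushed on top of [1 .. t+1]; then [t+2] must leave alone and the run
   [1 .. t+1] left behind is too long to be moved out. *)
Section DecrThenMaxUnsortable.
Variable t : nat.

Lemma unsortable_after_max :
  ~ reach (Fin 1) (Fin t) ([::], iota 1 t.+1, [:: t.+2]) (sorted_state t.+2).
Proof.
case/reachE => [//|[k [/andP[k_gt0 _] /=]]|[l [/andP[l_gt0 l_le] _]]]; first by lia.
rewrite take_iota (minn_idPl (leqW l_le)) => /reach_sorted_output/(_ 1 t.+1).
by rewrite !mem_cat !mem_iota !inE; lia.
Qed.

Lemma unsortable_max_on_top :
  ~ reach (Fin 1) (Fin t) ([::], t.+2 :: iota 1 t.+1, [::]) (sorted_state t.+2).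
Proof.
case/reachE => [//|[k [/andP[k_gt0 _] /=]]|[[|[|l]] [/andP[_ l_le] _]]] //; first by lia.
  exact: unsortable_after_max.
rewrite cats0 /= take_iota (minn_idPl (ltnW (ltnW l_le))) => /reach_sorted_output/(_ 1 t.+1).
by rewrite !inE !mem_iota; lia.
Qed.

Lemma unsortable_pushing i w : rev w ++ i = rev (iota 1 t.+1) ->
  ~ reach (Fin 1) (Fin t) (rcons i t.+2, w, [::]) (sorted_state t.+2).
Proof.
have no_output i' w' l i'' : rev w' ++ i' = rev (iota 1 t.+1) -> 0 < l -> l <= size w' ->
    ~ reach (Fin 1) (Fin t) (i'', drop l w', take l w' ++ [::]) (sorted_state t.+2).
  move=> Hw' l_gt0 l_le; rewrite cats0 => /reach_sorted_output out_up.
  have w'_small x : x \in w' -> x <= t.+1.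
    move=> Hx; have : x \in rev (iota 1 t.+1) by rewrite -Hw' mem_cat mem_rev Hx.
    by rewrite mem_rev mem_iota; lia.
  case: w' l_le w'_small out_up {Hw'} => [|x w''] /=; first by lia.
  move=> _ w'_small; rewrite -(prednK l_gt0) /= => out_up.
  have x_small := w'_small x (mem_head _ _).
  have : t.+2 \in x :: take l.-1 w'' by apply: out_up (mem_head _ _) _; lia.
  rewrite inE => /orP[/eqP|/mem_take in_w'']; first lia.
  by have := w'_small t.+2; rewrite inE in_w'' orbT => /(_ isT); lia.
elim: i w => [|x i IH] w Hw; case/reachE => [|[k [/allowed_Fin1-> _]]|[l [/andP[l_gt0 _] l_le]]].
- by case: w Hw.
- have -> /= : w = iota 1 t.+1 by rewrite -[w]revK -[iota _ _]revK -Hw cats0.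
  exact: unsortable_max_on_top.
- exact: no_output Hw l_gt0 l_le.
- by case.
- by rewrite /= drop0 take0 => /IH; apply; rewrite rev_cons cat_rcons.
- exact: no_output Hw l_gt0 l_le.
Qed.
End DecrThenMaxUnsortable.

Lemma decr_then_max_unsortable t : ~ sortable (Fin 1) (Fin t) (decr_then_max t).
Proof. by rewrite /sortable decr_then_max_size; apply: unsortable_pushing. Qed.

Definition next_states (x : state) : seq state :=
  let: (i, w, o) := x in
  (if i is _ :: _ then [:: (drop 1 i, take 1 i ++ w, o)] else [::]) ++
  [seq (i, drop l w, take l w ++ o) | l <- iota 1 (size w)].

Fixpoint reachable_within n (x y : state) : bool :=
  (x == y) || if n is n'.+1 then has (reachable_within n' ^~ y) (next_states x) else false.

Definition weight (x : state) : nat := let: (i, w, _) := x in 2 * size i + size w.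

Lemma move_next_state x y : move (Fin 1) Inf x y -> y \in next_states x /\ weight y < weight x.
Proof.
case=> [i w o k /allowed_Fin1-> Hki | i w o l /andP[l_gt0 _] l_le].
- by case: i Hki => // g i _; rewrite /= drop0 take0 cat0s inE eqxx; split => //; lia.
- split; last by rewrite /= size_drop; lia.
  by rewrite mem_cat; apply/orP; right; apply/mapP; exists l; rewrite ?mem_iota; first lia.
Qed.

Lemma reachable_within_complete x y n : reach (Fin 1) Inf x y -> weight x <= n ->
  reachable_within n x y.
Proof.
move=> Hr; elim: Hr n => [z [|n] _|x0 y0 z /move_next_state[Hy0 Hw] _ IH [|n] Hn] /=.
- by rewrite eqxx.
- by rewrite eqxx.
- by lia.
- by apply/orP; right; apply/hasP; exists y0 => //; apply: IH; lia.
Qed.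

Lemma unsortable_by_search p :
  ~~ reachable_within (2 * size p) (p, [::], [::]) (sorted_state (size p)) ->
  ~ sortable (Fin 1) Inf p.
Proof. by move=> /negP Hn /reachable_within_complete Hr; apply/Hn/Hr; rewrite /= addn0. Qed.

Lemma basis_Inf_unsortable r : r \in basis Inf -> ~ sortable (Fin 1) Inf r.
Proof. by rewrite !inE => /or3P[]/eqP->; apply: unsortable_by_search; vm_compute. Qed.

Lemma subseq_pair (T : eqType) (x y : T) s : x \in s -> y \in s -> x != y ->
  subseq [:: x; y] s \/ subseq [:: y; x] s.
Proof.
move=> /splitPr[s1 s2]; rewrite mem_cat inE eq_sym => /orP[y_s1|/predU1P[->|y_s2]];
  rewrite ?eqxx // => _.
- by right; rewrite -[[:: y; x]]/([:: y] ++ [:: x]) cat_subseq ?sub1seq // mem_head.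
- by left; rewrite -[[:: x; y]]/([::] ++ [:: x; y]) cat_subseq ?sub0seq //= eqxx sub1seq.
Qed.

Section GreedySort.
Variable c : cap.
Hypothesis c_ok : cap_ok c.

Inductive run_stack : seq nat -> Prop :=
| run_stack_nil : run_stack [::]
| run_stack_cons a k (w : seq nat) : allowed c k -> (forall x, x \in w -> x < a) -> run_stack w ->
    run_stack (iota a k ++ w).

Lemma allowed_one : allowed c 1.
Proof. by case: c c_ok. Qed.

Lemma run_stack_singleton g (w : seq nat) :
  (forall x, x \in w -> x < g) -> run_stack w -> run_stack (g :: w).
Proof. exact: run_stack_cons allowed_one. Qed.

Lemma run_extend_allowed g k (v : seq nat) M : allowed c k -> g + k < M ->
  subseq (rev (iota g.+1 k) ++ [:: g; M]) v -> avoids c v -> allowed c k.+1.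
Proof.
move=> + HM sub_v; case: c => [t|] //= /andP[k_gt0 k_le] Av.
rewrite /allowed /= ltn_neqAle k_le andbT.
apply/eqP => Ekt; apply: (Av (decr_then_max t)); first by rewrite mem_cat mem_head orbT.
apply: (@involved_decr_then_max t g M); first by lia.
by rewrite -Ekt /= rev_cons -!cats1 -catA.
Qed.

(* A gap below the top run [a ..] means that [a-1] was read either before [a]
   or after the smaller [g]; either way, with the pending maximum [M], one of
   2314, 3124, 3142 shows up. *)
Lemma run_gap_patterns g a k (w' i : seq nat) M : g.+1 < a -> a + k <= M -> 0 < k ->
  a.-1 \in i ++ w' -> M \in i -> ~ avoids c (rev w' ++ rev (iota a k) ++ g :: i).
Proof.
move=> g_lt a_le k_gt0 prev_in M_in Av.
have sub_a : subseq [:: a] (rev (iota a k)) by rewrite sub1seq mem_rev mem_iota; lia.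
have wit s1 s3 : subseq s1 (rev w') -> subseq s3 i ->
    subseq (s1 ++ [:: a] ++ g :: s3) (rev w' ++ rev (iota a k) ++ g :: i).
  by move=> h1 h3; rewrite !cat_subseq //= eqxx.
move: prev_in; rewrite mem_cat => /orP[prev_i|prev_w'].
- have prev_M : a.-1 != M by apply/eqP; lia.
  have [sub|sub] := subseq_pair prev_i M_in prev_M.
  + apply: (Av [:: 3; 1; 2; 4]) => //.
    by apply: (@involved_3124 a g a.-1 M _ _ _ (wit [::] _ (sub0seq _) sub)); lia.
  + apply: (Av [:: 3; 1; 4; 2]) => //.
    by apply: (@involved_3142 a g M a.-1 _ _ _ (wit [::] _ (sub0seq _) sub)); lia.
- apply: (Av [:: 2; 3; 1; 4]) => //.
  have sub_prev : subseq [:: a.-1] (rev w') by rewrite sub1seq mem_rev.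
  by apply: (@involved_2314 a.-1 a g M _ _ _ (wit _ [:: M] sub_prev _)); rewrite ?sub1seq //; lia.
Qed.

Lemma run_stack_push g (i w : seq nat) M : perm_eq (g :: i ++ w) (iota 1 M) -> M \notin w ->
  run_stack w -> avoids c (rev w ++ g :: i) -> run_stack (g :: w).
Proof.
move=> Pgiw M_w Rw; have U : uniq (g :: i ++ w) by rewrite (perm_uniq Pgiw) iota_uniq.
have range x : (x \in g :: i ++ w) = (0 < x <= M) by rewrite (perm_mem Pgiw) mem_iota add1n ltnS.
case: Rw U range M_w {Pgiw} => [|a k w' Hk w'_lt Rw'] U range.
  by move=> _ _; apply: run_stack_singleton => //; constructor.
rewrite mem_cat mem_iota negb_or => /andP[M_run M_w'].
rewrite rev_cat -catA => Av; have k_gt0 : 0 < k by case/andP: Hk.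
move: U => /= /andP[g_notin] _.
have g_run : ~~ (a <= g < a + k).
  by apply: contra g_notin => g_run; rewrite !mem_cat mem_iota g_run !orbT.
have g_w' : g \notin w' by apply: contra g_notin => g_w'; rewrite !mem_cat g_w' !orbT.
have top_le : a + k <= M.
  have top_run : a <= a + k - 1 < a + k by lia.
  move: (range (a + k - 1)); rewrite inE !mem_cat mem_iota top_run /= !orbT => /esym/andP[_].
  by move: M_run; lia.
case: (leqP (a + k) g) => [g_big|g_small].
  apply: run_stack_singleton; last exact: run_stack_cons Hk w'_lt Rw'.
  by move=> x; rewrite mem_cat mem_iota => /orP[|/w'_lt]; lia.
have g_lt_a : g < a by lia.
have M_in : M \in i.
  have : M \in g :: i ++ iota a k ++ w' by rewrite range; lia.
  by rewrite inE !mem_cat mem_iota (negbTE M_run) (negbTE M_w') !orbF => /orP[/eqP|]; first lia.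
case: (eqVneq g.+1 a) => [Ea|gap].
  subst a; apply: (@run_stack_cons g k.+1) => //.
    apply: (run_extend_allowed (g := g) (M := M) Hk) Av; first by lia.
    by rewrite -[_ ++ [:: g; M]]cat0s !cat_subseq ?sub0seq //= eqxx sub1seq.
  move=> x x_w'; have := w'_lt x x_w'; have /eqP : x != g by apply: contraNneq g_w' => <-.
  lia.
have gap_lt : g.+1 < a by rewrite ltn_neqAle gap.
exfalso; apply: (run_gap_patterns gap_lt top_le k_gt0 _ M_in Av); rewrite mem_cat.
have : a.-1 \in g :: i ++ iota a k ++ w' by rewrite range; lia.
by rewrite inE !mem_cat mem_iota => /or4P[/eqP|->|/andP[]|->]; rewrite ?orbT //; lia.
Qed.

Definition greedy_inv (i w : seq nat) : Prop :=
  [/\ perm_eq (i ++ w) (iota 1 (size i + size w)), run_stack w & avoids c (rev w ++ i)].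

Lemma greedy_inv_push g (i w : seq nat) :
  greedy_inv (g :: i) w -> size (g :: i) + size w \notin w -> greedy_inv i (g :: w).
Proof.
case=> Pgiw Rw Av M_w; split; last by rewrite rev_cons cat_rcons.
- by rewrite /= addnS; apply: perm_trans Pgiw; rewrite -cat1s perm_catCA.
- exact: run_stack_push Pgiw M_w Rw Av.
Qed.

Lemma greedy_inv_pop (i : seq nat) a k (w' : seq nat) : greedy_inv i (iota a k ++ w') -> 0 < k ->
  (forall x, x \in w' -> x < a) -> run_stack w' ->
  size i + size (iota a k ++ w') \in iota a k ++ w' ->
  a + k = (size i + size (iota a k ++ w')).+1 /\ greedy_inv i w'.
Proof.
set M := size i + _; case=> P _ Av k_gt0 w'_lt Rw' M_in; rewrite -/M in P.
have run_range x : a <= x < a + k -> 0 < x <= M.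
  move=> x_run; have : x \in i ++ iota a k ++ w' by rewrite !mem_cat mem_iota x_run orbT.
  by rewrite (perm_mem P) mem_iota; lia.
have top : a + k = M.+1.
  have := run_range (a + k - 1); move: M_in; rewrite mem_cat mem_iota => /orP[|/w'_lt]; lia.
have a_gt0 : 0 < a by have := run_range a; lia.
split=> //; split=> //.
- have -> : size i + size w' = M - k by rewrite /M size_cat size_iota; lia.
  have Eiota : iota 1 M = iota 1 (M - k) ++ iota a k.
    by rewrite (_ : a = 1 + (M - k)) -?iotaD; [congr iota|]; lia.
  rewrite -(perm_cat2r (iota a k)) -Eiota -catA.
  by apply: perm_trans P; rewrite perm_cat2l perm_catC.
- apply: avoids_subseq Av; rewrite rev_cat -catA.
  by rewrite cat_subseq // -[X in subseq X]cat0s cat_subseq ?sub0seq.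
Qed.

Lemma greedy_sorts n N (i w : seq nat) : 2 * size i + size w <= n -> size i + size w <= N ->
  greedy_inv i w ->
  reach (Fin 1) c (i, w, iota (size i + size w).+1 (N - (size i + size w))) (sorted_state N).
Proof.
elim: n i w => [|n IH] i w Hn HN Inv;
  case: (posnP (size i + size w)) => [M0|M_gt0]; try lia.
1,2: by move/eqP: M0; rewrite addn_eq0 => /andP[/nilP-> /nilP->]; rewrite subn0; apply: reach_refl.
case: (boolP (size i + size w \in w)) => [M_w|M_w].
  have [_ Rw _] := Inv.
  case: Rw M_w Hn HN Inv => [|a k w' Hk w'_lt Rw'] // M_w Hn HN Inv.
  have k_gt0 : 0 < k by case/andP: Hk.
  have [top Inv'] := greedy_inv_pop Inv k_gt0 w'_lt Rw' M_w.
  apply: reach_step (move_out _ _ _ Hk _) _; first by rewrite size_cat size_iota leq_addr.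
  rewrite take_size_cat ?size_iota // drop_size_cat ?size_iota //.
  rewrite size_cat size_iota in top Hn HN *.
  have -> : iota a k ++ iota (size i + (k + size w')).+1 (N - (size i + (k + size w'))) =
            iota (size i + size w').+1 (N - (size i + size w')).
    rewrite [in RHS](_ : N - _ = k + (N - (size i + (k + size w')))) ?iotaD; last by lia.
    by congr (iota _ _ ++ iota _ _); lia.
  by apply: IH Inv'; lia.
have [Pw _ _] := Inv.
have : size i + size w \in i ++ w by rewrite (perm_mem Pw) mem_iota; lia.
case: i Inv Pw M_w Hn HN {M_gt0} => [|g i] Inv _ M_w Hn HN M_iw.
  by rewrite /= (negbTE M_w) in M_iw.
apply: (reach_step (@move_in (Fin 1) c (g :: i) w _ 1 erefl erefl)); rewrite /= drop0 take0.
have -> : (size i).+1 + size w = size i + size (g :: w) by rewrite addSn addnS.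
by apply: IH (greedy_inv_push Inv M_w); rewrite /= in Hn HN *; lia.
Qed.

Lemma avoiding_sortable p : is_perm p -> avoids c p -> sortable (Fin 1) c p.
Proof.
move=> Pp Ap; have := @greedy_sorts (2 * size p) (size p) p [::].
by rewrite /= !addn0 subnn; apply=> //; split; rewrite ?cats0 ?addn0 //; constructor.
Qed.
End GreedySort.

Lemma inU_antichain s t (L : seq (seq nat)) p :
  (forall q, q \in L -> is_perm q /\ ~ sortable s t q) ->
  (forall q, is_perm q -> (forall r, r \in L -> ~ involved r q) -> sortable s t q) ->
  {in L &, forall q r, involved r q -> r = q} ->
  inU s t p <-> p \in L.
Proof.
move=> unsortable_L avoid_L antichain; split.
- case=> Pp NSp min_p; apply: NNPP => p_L; apply: NSp; apply: avoid_L => // r r_L rp.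
  have [Pr NSr] := unsortable_L r r_L; apply: NSr; apply: min_p => // Erp.
  by apply: p_L; rewrite -Erp.
- move=> p_L; have [Pp NSp] := unsortable_L p p_L; split=> // q Pq qp q_ne_p.
  apply: avoid_L => // r r_L rq.
  have Erp := antichain p r p_L r_L (involved_trans (is_perm_uniq Pq) rq qp).
  have := involved_lt Pq Pp qp q_ne_p; have := involved_size rq; rewrite Erp; lia.
Qed.

Lemma basis_perm c q : q \in basis c -> is_perm q.
Proof.
rewrite mem_cat => /orP[|]; first by rewrite !inE => /or3P[]/eqP->.
by case: c => [t|] //; rewrite inE => /eqP->; apply: decr_then_max_perm.
Qed.

Lemma basis_unsortable c q : q \in basis c -> ~ sortable (Fin 1) c q.
Proof.
rewrite mem_cat => /orP[q_Inf|]; last first.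
  by case: c => [t|] //; rewrite inE => /eqP->; apply: decr_then_max_unsortable.
case: c => [t|]; last exact: basis_Inf_unsortable.
by move/reach_widen_out; apply: basis_Inf_unsortable.
Qed.

Lemma basis_antichain c : allowed c 2 -> {in basis c &, forall q r, involved r q -> r = q}.
Proof.
move=> c2 q r q_in r_in rq; have Pq := basis_perm q_in; have Pr := basis_perm r_in.
case: (leqP (size q) (size r)) => [qr|rq_lt].
  by apply: involved_eq => //; apply/eqP; rewrite eqn_leq qr involved_size.
have size_Inf x : x \in basis Inf -> size x = 4 by rewrite !inE => /or3P[]/eqP->.
move: q_in r_in; rewrite !mem_cat => /orP[q_Inf|q_t] /orP[r_Inf|r_t].
- by move: rq_lt; rewrite (size_Inf _ q_Inf) (size_Inf _ r_Inf).
- case: c c2 r_t => [t|] //= t2; rewrite inE => /eqP Er.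
  by move: rq_lt t2; rewrite Er decr_then_max_size (size_Inf _ q_Inf) /allowed; lia.
- case: c c2 q_t => [t|] //= _; rewrite inE => /eqP Eq.
  by case: (decr_then_max_avoids (t := t) r_Inf); rewrite -Eq.
- by case: c c2 q_t r_t => [t|] //= _; rewrite !inE => /eqP-> /eqP->.
Qed.

Lemma inU_basis c p : allowed c 2 -> inU (Fin 1) c p <-> p \in basis c.
Proof.
move=> c2; have c_ok : cap_ok c by case: c c2 => [t /andP[_ /ltnW]|].
apply: inU_antichain; [|exact: avoiding_sortable|exact: basis_antichain].
by move=> q q_in; split; [apply: basis_perm q_in|apply: basis_unsortable].
Qed.

Theorem mainTheorem4 :
  (forall p : seq nat,
     inU (Fin 1) Inf p <->
     p \in [:: [:: 2; 3; 1; 4]; [:: 3; 1; 2; 4]; [:: 3; 1; 4; 2]]) /\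
  (forall t : nat, 2 <= t -> forall p : seq nat,
     inU (Fin 1) (Fin t) p <->
     p \in [:: [:: 2; 3; 1; 4]; [:: 3; 1; 2; 4]; [:: 3; 1; 4; 2];
               rcons (rev (iota 1 t.+1)) t.+2]).
Proof. by split=> [p|t t2 p]; apply: inU_basis => //; rewrite /allowed t2. Qed.
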